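(* For every finite set $S$, the monotone map $\eta_S \colon 1 \star S \to [1]^S$ exhibits $[1]^S$ as the free semilattice on the poset $1\star S$. That is, for every semilattice $A$ and every monotone map $f \colon 1 \star S \to A$ (with respect to the order $x\le y \iff x\vee y=y$ on $A$), there is a unique semilattice homomorphism $f^\dagger \colon [1]^S \to A$ such that $f = f^\dagger \circ \eta_S$.
   Context: A (join-)semilattice is a set with an associative, commutative, idempotent binary operation $\vee$; a semilattice homomorphism is a map preserving $\vee$ (no bounds required). Every semilattice is a poset via $x \le y \iff x \vee y = y$. $[1]=\{0<1\}$ is the two-element linear order with $\vee=\max$, and $[1]^S$ carries the pointwise semilattice structure. For a set $S$ (viewed as a discrete poset), $1 \star S$ denotes the poset obtained by adjoining a new minimum element $\bot$ to $S$. The map $\eta_S \colon 1\star S \to [1]^S$ sends $\bot$ to the constant function $0$ and $i \in S$ to the function that is $1$ at $i$ and $0$ elsewhere. *)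

From HB Require Import structures.
From mathcomp Require Import all_boot all_order.
Set Implicit Arguments. Unset Strict Implicit. Unset Printing Implicit Defensive.
Import Order.TTheory.
Local Open Scope order_scope.

(* 1 ⋆ S : the discrete set S with a new minimum adjoined, modelled as
   [option S] with [None] = ⊥ and [Some i] = i. *)
Definition star_le (S : finType) (x y : option S) : bool :=
  match x, y with
  | None, _ => true
  | Some i, Some j => i == j
  | Some _, None => false
  end.

(* [1]^S = functions S -> {0<1} (bool, false = 0), pointwise join = max = orb. *)
Definition pjoin (S : finType) (u v : {ffun S -> bool}) : {ffun S -> bool} :=
  [ffun i => u i || v i].

Definition etaS (S : finType) (x : option S) : {ffun S -> bool} :=
  match x with
  | None => [ffun _ => false]
  | Some i => [ffun j => j == i]
  end.

Definition star_monotone (S : finType) d (A : joinSemilatticeType d)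
  (f : option S -> A) : Prop :=
  forall x y : option S, star_le x y -> f x `|` f y = f y.

Definition pjoin_hom (S : finType) d (A : joinSemilatticeType d)
  (g : {ffun S -> bool} -> A) : Prop :=
  forall u v, g (pjoin u v) = g u `|` g v.

From HB Require Import structures.
From Stdlib Require Import FunctionalExtensionality.
From mathcomp Require Import all_boot all_order.
Local Open Scope order_scope.
Import Order.TTheory.

(* Every u in [1]^S is the join of eta(bot) and the eta(i) with u i = 1, so a
   homomorphism out of [1]^S is determined by its values on the image of eta.
   Conversely, f^dagger u is the join of f(bot) with the f(i) for u i = 1
   (f(bot) stands in for the bottom that A may lack); it is a homomorphism
   because joins are idempotent, and it extends f because f is monotone. *)

(* Joining every term with the default [x] first makes the two sides agree
   term by term. *)
Lemma big_joinU d (A : joinSemilatticeType d) (I : finType) (x : A)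
    (P Q : pred I) (F : I -> A) :
  \big[Order.join/x]_(i | P i || Q i) F i =
    \big[Order.join/x]_(i | P i) F i `|` \big[Order.join/x]_(i | Q i) F i.
Proof.
have xx : x `|` x = x by exact: joinxx.
rewrite !(big_mkcond_idem xx _ _ F) -(big_split_idem xx).
rewrite -[LHS](big_id_idem_AC xx) -[RHS](big_id_idem_AC xx).
apply: eq_bigr => i _; case: (P i); case: (Q i) => /=;
  by rewrite -!joinA ?joinKU ?joinxx // joinCA joinxx.
Qed.

Section FreeSemilattice.
Context {S : finType} {d : Order.disp_t} {A : joinSemilatticeType d}.

Definition free_ext (f : option S -> A) (u : {ffun S -> bool}) : A :=
  \big[Order.join/f None]_(i | u i) f (Some i).

Lemma free_ext_hom (f : option S -> A) : pjoin_hom (free_ext f).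
Proof.
move=> u v; rewrite /free_ext -big_joinU.
by apply: eq_bigl => i; rewrite ffunE.
Qed.

Lemma free_ext_eta (f : option S -> A) :
  star_monotone f -> forall x, free_ext f (etaS x) = f x.
Proof.
move=> f_mono [i|]; rewrite /free_ext.
  rewrite (big_pred1_id _ _ _ (_ : _ =1 pred1 i)) => [|j]; last by rewrite ffunE.
  by rewrite joinC f_mono.
by rewrite big_pred0 // => j; rewrite ffunE.
Qed.

Lemma ffun_big_pjoin_eta (u : {ffun S -> bool}) :
  u = \big[@pjoin S/etaS None]_(i | u i) etaS (Some i).
Proof.
apply/ffunP => j.
rewrite (big_morph (fun w : {ffun S -> bool} => w j) (op1 := orb) (id1 := false))
  => [|v w|]; rewrite ?ffunE //.
rewrite big_orE; apply/idP/existsP => [uj | [i]].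
  by exists j; rewrite uj ffunE eqxx.
by rewrite ffunE => /andP[ui /eqP->].
Qed.

Lemma pjoin_homE (g : {ffun S -> bool} -> A) :
  pjoin_hom g -> g =1 free_ext (g \o @etaS S).
Proof.
move=> g_hom u; rewrite [in LHS](ffun_big_pjoin_eta u).
exact: (big_morph g g_hom).
Qed.

End FreeSemilattice.

Theorem mainTheorem1 (S : finType) (d : Order.disp_t) (A : joinSemilatticeType d)
  (f : option S -> A) :
  star_monotone f ->
  exists! g : {ffun S -> bool} -> A,
    pjoin_hom g /\ (forall x : option S, f x = g (etaS x)).
Proof.
move=> f_mono; exists (free_ext f); split.
  by split=> [|x]; [exact: free_ext_hom | rewrite free_ext_eta].
move=> g [g_hom g_eta]; apply: functional_extensionality => u.
rewrite (pjoin_homE _ g_hom) /free_ext g_eta.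
by apply: eq_bigr => i _; rewrite g_eta.
Qed.
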